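(* Let $\mathbf K\in\mathcal T_h$ with invertible affine map $T_{\mathbf K}:\widehat{\mathbf K}\to\mathbf K$, and let $w\in\mathcal{NC}_0^h$. Put $\hat w=w|_{\mathbf K}\circ T_{\mathbf K}\in\widehat{\mathbb P}^{(1)}_{SK}$. Then for each $i\in\{1,2,3\}$, writing $\hat y$ for the pair of coordinates other than $\hat x_i$, the functions $$\hat y\mapsto \hat w|_{\hat x_i=1}(\hat y)-\bigl(\widehat{\mathcal I}^{x_i^+}\hat w\bigr)(\hat y)\quad\text{and}\quad \hat y\mapsto \hat w|_{\hat x_i=-1}(\hat y)-\bigl(\widehat{\mathcal I}^{x_i^-}\hat w\bigr)(\hat y),\qquad \hat y\in[-1,1]^2,$$ coincide; equivalently, $w|_{F_{\mathbf K}^{x_i^+}}-\mathcal I_F^{x_i^+}(w|_{\mathbf K})$ and $w|_{F_{\mathbf K}^{x_i^-}}-\mathcal I_F^{x_i^-}(w|_{\mathbf K})$ agree at corresponding points $T_{\mathbf K}(\hat x)$ of the two opposite faces (points with the same $\hat y$).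
   Context: Let $\widehat{\mathbf K}=[-1,1]^3$ with coordinates $(\hat x_1,\hat x_2,\hat x_3)$; $P_2$ denotes polynomials of total degree at most $2$, and $\widehat{\mathbb P}^{(1)}_{SK}=P_2\oplus\mathrm{Span}\{\hat x_1\hat x_2\hat x_3,\hat x_1^2\hat x_2,\hat x_2^2\hat x_3,\hat x_3^2\hat x_1\}$. Let $\Omega\subset\mathbb R^3$ be a parallelepiped domain with boundary $\Gamma$, $\mathcal T_h$ a partition of $\Omega$ into parallelepipeds, each $\mathbf K=T_{\mathbf K}(\widehat{\mathbf K})$ with $T_{\mathbf K}$ invertible affine; $\mathcal{NC}_0^h$ is the space of functions $\phi$ with $\phi|_{\mathbf K}\circ T_{\mathbf K}\in\widehat{\mathbb P}^{(1)}_{SK}$ for all $\mathbf K$, continuous at all element vertices and face-centroids, and vanishing at those on $\Gamma$. Face interpolation: on the faces $\hat x_1=\pm1$ of $\widehat{\mathbf K}$ use the space $\mathrm{Span}\{1,\hat x_2,\hat x_3,\hat x_2\hat x_3,\hat x_3^2\}$; on the faces $\hat x_2=\pm1$ the space $\mathrm{Span}\{1,\hat x_3,\hat x_1,\hat x_3\hat x_1,\hat x_1^2\}$; on the faces $\hat x_3=\pm1$ the space $\mathrm{Span}\{1,\hat x_1,\hat x_2,\hat x_1\hat x_2,\hat x_2^2\}$. For a continuous $g$ on $\widehat{\mathbf K}$, $\widehat{\mathcal I}^{x_i^\pm}g$ is the unique element of the corresponding space (a function of the two coordinates other than $\hat x_i$) that agrees with $g$ at the four vertices and at the centroid of the face $\hat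 x_i=\pm1$. On $\mathbf K$, $F_{\mathbf K}^{x_i^\pm}=T_{\mathbf K}(\{\hat x_i=\pm1\})$ and $\mathcal I_F^{x_i^\pm}(w|_{\mathbf K})=(\widehat{\mathcal I}^{x_i^\pm}(w|_{\mathbf K}\circ T_{\mathbf K}))\circ T_{\mathbf K}^{-1}$ on that face. *)

From mathcomp Require Import all_boot all_order all_algebra.
From mathcomp Require Import reals.
Set Implicit Arguments. Unset Strict Implicit. Unset Printing Implicit Defensive.
Import Order.TTheory GRing.Theory Num.Theory.
Local Open Scope ring_scope.

Section Defs.
Variable R : realType.

(* points of R^3 are row vectors; coordinate j (j = 0,1,2 stands for x_1,x_2,x_3) *)
Definition crd (x : 'rV[R]_3) (j : nat) : R := x ord0 (inord j).

Definition in_refcube (x : 'rV[R]_3) : Prop :=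
  forall j : 'I_3, -1 <= x ord0 j <= 1.

Definition in_PSK (f : 'rV[R]_3 -> R) : Prop :=
  exists c : nat -> R, forall x, in_refcube x ->
    let x1 := crd x 0 in let x2 := crd x 1 in let x3 := crd x 2 in
    f x = c 0%N + c 1%N * x1 + c 2%N * x2 + c 3%N * x3
        + c 4%N * x1 ^+ 2 + c 5%N * x2 ^+ 2 + c 6%N * x3 ^+ 2
        + c 7%N * (x1 * x2) + c 8%N * (x2 * x3) + c 9%N * (x3 * x1)
        + c 10%N * (x1 * x2 * x3) + c 11%N * (x1 ^+ 2 * x2)
        + c 12%N * (x2 ^+ 2 * x3) + c 13%N * (x3 ^+ 2 * x1).

(* The point of the face  x_i = s  with the two remaining coordinates
   y = (a, b) = (x_{i+1}, x_{i+2}) (indices cyclic mod 3):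
   i=1: (a,b)=(x2,x3);  i=2: (a,b)=(x3,x1);  i=3: (a,b)=(x1,x2). *)
Definition face_pt (i : 'I_3) (s a b : R) : 'rV[R]_3 :=
  \row_(j < 3) if j == i then s
               else if val j == ((val i).+1 %% 3)%N then a else b.

(* The face space, written in the coordinates (a,b) above:
   span{1, a, b, a b, b^2}  (e.g. on x1 = +-1: span{1,x2,x3,x2 x3,x3^2}). *)
Definition in_face_space (p : R -> R -> R) : Prop :=
  exists d : nat -> R, forall a b,
    p a b = d 0%N + d 1%N * a + d 2%N * b + d 3%N * (a * b) + d 4%N * b ^+ 2.

Definition is_face_interp (i : 'I_3) (s : R) (g : 'rV[R]_3 -> R)
    (p : R -> R -> R) : Prop :=
  in_face_space p /\
  (forall a b : R, (a = 1 \/ a = -1) -> (b = 1 \/ b = -1) ->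
     p a b = g (face_pt i s a b)) /\
  p 0 0 = g (face_pt i s 0 0).

End Defs.

(** The face space span{1, a, b, ab, b^2} is unisolvent for the four vertices
    and the centroid of a face, so the face interpolant is a linear projection
    onto it.  Restricting an element of P_SK^(1) to the opposite faces
    x_i = 1 and x_i = -1 and subtracting leaves twice its part odd in x_i, and
    every monomial of P_SK^(1) that is linear in x_i has the form x_i q with q in
    that face space.  Hence the jump across the cube is reproduced by the
    interpolant, and the two interpolation errors coincide. *)
From mathcomp Require Import all_boot all_order all_algebra.
From mathcomp Require Import reals.
From mathcomp Require Import ring lra.
Set Implicit Arguments. Unset Strict Implicit. Unset Printing Implicit Defensive.
Import Order.TTheory GRing.Theory Num.Theory.
Local Open Scope ring_scope.

Section FaceInterpolation.
Variable R : realType.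

Definition face_poly (d : nat -> R) (a b : R) : R :=
  d 0%N + d 1%N * a + d 2%N * b + d 3%N * (a * b) + d 4%N * b ^+ 2.

Lemma face_poly_space (d : nat -> R) : in_face_space (face_poly d).
Proof. by exists d. Qed.

Definition face_interp (q : R -> R -> R) (a b : R) : R :=
  q 0 0 + (q 1 1 + q 1 (-1) - q (-1) 1 - q (-1) (-1)) / 4 * a
  + (q 1 1 - q 1 (-1) + q (-1) 1 - q (-1) (-1)) / 4 * b
  + (q 1 1 - q 1 (-1) - q (-1) 1 + q (-1) (-1)) / 4 * (a * b)
  + ((q 1 1 + q 1 (-1) + q (-1) 1 + q (-1) (-1)) / 4 - q 0 0) * b ^+ 2.

Lemma face_interp_space (q : R -> R -> R) : in_face_space (face_interp q).
Proof.
exists (fun k => [:: q 0 0; (q 1 1 + q 1 (-1) - q (-1) 1 - q (-1) (-1)) / 4;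
  (q 1 1 - q 1 (-1) + q (-1) 1 - q (-1) (-1)) / 4;
  (q 1 1 - q 1 (-1) - q (-1) 1 + q (-1) (-1)) / 4;
  (q 1 1 + q 1 (-1) + q (-1) 1 + q (-1) (-1)) / 4 - q 0 0]`_k).
by [].
Qed.

Lemma face_interp_vertex (q : R -> R -> R) (a b : R) :
  (a = 1 \/ a = -1) -> (b = 1 \/ b = -1) -> face_interp q a b = q a b.
Proof. by move=> [->|->] [->|->]; rewrite /face_interp; field. Qed.

Lemma face_interp_centroid (q : R -> R -> R) : face_interp q 0 0 = q 0 0.
Proof. by rewrite /face_interp; ring. Qed.

Lemma face_interp_id (p : R -> R -> R) (a b : R) :
  in_face_space p -> face_interp p a b = p a b.
Proof. by case=> d Hd; rewrite /face_interp !Hd; field. Qed.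

Lemma face_interpB (q1 q2 : R -> R -> R) (a b : R) :
  face_interp (fun x y => q1 x y - q2 x y) a b
  = face_interp q1 a b - face_interp q2 a b.
Proof. by rewrite /face_interp; ring. Qed.

(* Only the values on [-1,1]^2 enter the interpolant. *)
Lemma face_interp_id_on_square (q p : R -> R -> R) (a b : R) :
  in_face_space p ->
  (forall x y, -1 <= x <= 1 -> -1 <= y <= 1 -> q x y = p x y) ->
  -1 <= a <= 1 -> -1 <= b <= 1 -> face_interp q a b = p a b.
Proof.
move=> Hp Hqp Ha Hb.
have I1 : -1 <= (1 : R) <= 1 by apply/andP; split; lra.
have Im : -1 <= (-1 : R) <= 1 by apply/andP; split; lra.
have I0 : -1 <= (0 : R) <= 1 by apply/andP; split; lra.
by rewrite -(@face_interp_id p a b Hp) /face_interp !Hqp.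
Qed.

Lemma is_face_interpE (i : 'I_3) (s : R) (g : 'rV[R]_3 -> R) p (a b : R) :
  is_face_interp i s g p -> p a b = face_interp (fun x y => g (face_pt i s x y)) a b.
Proof.
case=> Hp [Hv H0]; rewrite -(@face_interp_id p a b Hp) /face_interp H0 !Hv //;
  by [left | right].
Qed.

Lemma is_face_interp_exists (i : 'I_3) (s : R) (g : 'rV[R]_3 -> R) :
  is_face_interp i s g (face_interp (fun x y => g (face_pt i s x y))).
Proof.
split; first exact: face_interp_space.
split=> [a b Ha Hb|]; [exact: face_interp_vertex | exact: face_interp_centroid].
Qed.

Lemma crd_face_pt (i : 'I_3) (s a b : R) (j : nat) : (j < 3)%N ->
  crd (face_pt i s a b) j =
  if j == val i then s else if j == ((val i).+1 %% 3)%N then a else b.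
Proof. by move=> Hj; rewrite /crd /face_pt mxE -val_eqE /= inordK. Qed.

Lemma in_refcube_face_pt (i : 'I_3) (s a b : R) : -1 <= s <= 1 ->
  -1 <= a <= 1 -> -1 <= b <= 1 -> in_refcube (face_pt i s a b).
Proof.
by move=> Hs Ha Hb j; rewrite /face_pt mxE; case: ifP => _ //; case: ifP.
Qed.

Lemma in_PSK_face_jump (f : 'rV[R]_3 -> R) (i : 'I_3) : in_PSK f ->
  exists d : nat -> R, forall a b : R, -1 <= a <= 1 -> -1 <= b <= 1 ->
    f (face_pt i 1 a b) - f (face_pt i (-1) a b) = face_poly d a b.
Proof.
case=> c Hc.
have I1 : -1 <= (1 : R) <= 1 by apply/andP; split; lra.
have Im : -1 <= (-1 : R) <= 1 by apply/andP; split; lra.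
(* The coefficients of x_i, x_i x_{i+1}, x_{i+2} x_i, x_1 x_2 x_3, x_{i+2}^2 x_i. *)
case: i => [[|[|[|k]]] Hi] //=.
- exists (fun k => 2 * [:: c 1%N; c 7%N; c 9%N; c 10%N; c 13%N]`_k) => a b Ha Hb.
  rewrite !Hc; try exact: in_refcube_face_pt.
  by rewrite !crd_face_pt //= /face_poly /=; ring.
- exists (fun k => 2 * [:: c 2%N; c 8%N; c 7%N; c 10%N; c 11%N]`_k) => a b Ha Hb.
  rewrite !Hc; try exact: in_refcube_face_pt.
  by rewrite !crd_face_pt //= /face_poly /=; ring.
- exists (fun k => 2 * [:: c 3%N; c 9%N; c 8%N; c 10%N; c 12%N]`_k) => a b Ha Hb.
  rewrite !Hc; try exact: in_refcube_face_pt.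
  by rewrite !crd_face_pt //= /face_poly /=; ring.
Qed.

Lemma in_PSK_face_interp_error (f : 'rV[R]_3 -> R) (i : 'I_3)
    (pp pm : R -> R -> R) (a b : R) :
  in_PSK f -> is_face_interp i 1 f pp -> is_face_interp i (-1) f pm ->
  -1 <= a <= 1 -> -1 <= b <= 1 ->
  f (face_pt i 1 a b) - pp a b = f (face_pt i (-1) a b) - pm a b.
Proof.
move=> /(in_PSK_face_jump i) [d Hd] Hp Hm Ha Hb.
have jump_interp : pp a b - pm a b = face_poly d a b.
  rewrite (is_face_interpE a b Hp) (is_face_interpE a b Hm) -face_interpB.
  exact: face_interp_id_on_square (face_poly_space d) Hd Ha Hb.
have := Hd a b Ha Hb; rewrite -jump_interp; lra.
Qed.

End FaceInterpolation.

(* The affine map only enters through w_hat. *)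
Theorem lemma4 (R : realType) (A : 'M[R]_3) (t : 'rV[R]_3)
    (w : 'rV[R]_3 -> R) :
  A \in unitmx ->
  in_PSK (fun xh => w (xh *m A + t)) ->
  forall i : 'I_3,
    let wh := fun xh => w (xh *m A + t) in
    (exists pp pm : R -> R -> R,
        is_face_interp i 1 wh pp /\ is_face_interp i (-1) wh pm) /\
    (forall pp pm : R -> R -> R,
        is_face_interp i 1 wh pp -> is_face_interp i (-1) wh pm ->
        forall a b : R, -1 <= a <= 1 -> -1 <= b <= 1 ->
          wh (face_pt i 1 a b) - pp a b = wh (face_pt i (-1) a b) - pm a b).
Proof.
move=> _ Hw i wh; split.
  by do 2 eexists; split; apply: is_face_interp_exists.
by move=> pp pm Hp Hm a b; apply: in_PSK_face_interp_error.
Qed.
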